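(* Let $P_1\in\mathbf{A}^{k_1\times k_2}$. (i) If the left $\mathbf{A}$-module ${}_{\mathbf{A}}E'$ is injective, then $\operatorname{im}_{E'}(P_1\bullet)$ is closed in $(E')^{k_1}$, and $\bullet P_1:E^{1\times k_1}\to E^{1\times k_2}$ is a strict morphism. (ii) If the left $\mathbf{A}$-module $\operatorname{coker}_{\mathbf{A}}(\bullet P_1)=\mathbf{A}^{1\times k_2}/(\mathbf{A}^{1\times k_1}P_1)$ is torsion-free and the right $\mathbf{A}$-module $E_{\mathbf{A}}$ is flat, then $\operatorname{im}_E(\bullet P_1)$ is closed in $E^{1\times k_2}$, and $P_1\bullet:(E')^{k_2}\to(E')^{k_1}$ is a strict morphism.
   Context: Let $\mathbf{k}=\mathbb{R}$ or $\mathbb{C}$ and let $\mathbf{A}$ be a (not necessarily commutative) Noetherian domain which is a $\mathbf{k}$-algebra. Let $E,E'$ be $\mathbf{k}$-vector spaces with a nondegenerate bilinear form $\langle -,-\rangle:E\times E'\to\mathbf{k}$; $E$ and $E'$ carry the weak topologies $\sigma(E,E')$ and $\sigma(E',E)$. Assume $E'$ is a left $\mathbf{A}$-module which is semitopological, i.e. each map $x'\mapsto a\,x'$ ($a\in\mathbf{A}$) is continuous. Then $E$ is a right $\mathbf{A}$-module via $\langle x\,a,x'\rangle=\langle x,a\,x'\rangle$. The bracket extends to $E^{1\times k}\times (E')^{k}$, making $(E^{1\times k},(E')^k)$ a dual pair (with weak topologies). For $P\in\mathbf{A}^{q\times k}$, $P\bullet:(E')^k\to(E')^q$, $x'\mapsto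 P\,x'$, and its transpose $\bullet P:E^{1\times q}\to E^{1\times k}$, $x\mapsto x\,P$; likewise $\bullet P:\mathbf{A}^{1\times q}\to\mathbf{A}^{1\times k}$. A continuous linear map $f:X\to Y$ between topological vector spaces is a strict morphism if the induced bijection $X/\ker f\to\operatorname{im}f$ is a topological isomorphism, where $\operatorname{im} f$ carries the subspace topology. *)

From HB Require Import structures.
From mathcomp Require Import all_boot all_order all_algebra.
Set Implicit Arguments. Unset Strict Implicit. Unset Printing Implicit Defensive.
Import Order.TTheory GRing.Theory Num.Theory.
Local Open Scope ring_scope.

Section WeakTopology.
Variable K : numFieldType.

(* Open sets of the weak topology sigma(Y, X) on Y induced by a pairing
   b : X -> Y -> K (basic neighbourhoods: finitely many seminorms |b x .|). *)
Definition wopen (X Y : Type) (b : X -> Y -> K) (U : Y -> Prop) : Prop :=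
  forall y, U y -> exists (n : nat) (xs : 'I_n -> X) (e : K), 0 < e /\
    forall z, (forall i, `|b (xs i) z - b (xs i) y| < e) -> U z.

Definition wclosed (X Y : Type) (b : X -> Y -> K) (F : Y -> Prop) : Prop :=
  wopen b (fun y => ~ F y).

(* the transposed pairing, giving sigma(X, Y) on X *)
Definition tpair (X Y : Type) (b : X -> Y -> K) : Y -> X -> K := fun y x => b x y.

Definition wcontinuous (X1 Y1 X2 Y2 : Type) (b1 : X1 -> Y1 -> K)
  (b2 : X2 -> Y2 -> K) (f : Y1 -> Y2) : Prop :=
  forall V, wopen b2 V -> wopen b1 (fun y => V (f y)).

(* strict morphism: f continuous and the induced bijection Y1/ker f -> im f
   is a homeomorphism (quotient topology on Y1/ker f, whose open sets are the
   images of the ker f-saturated open sets of Y1; subspace topology on im f). *)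
Definition strict_morphism (X1 Y1 X2 Y2 : Type) (b1 : X1 -> Y1 -> K)
  (b2 : X2 -> Y2 -> K) (f : Y1 -> Y2) : Prop :=
  wcontinuous b1 b2 f /\
  forall U, wopen b1 U -> (forall y z, U y -> f z = f y -> U z) ->
    exists V, wopen b2 V /\
      forall w, (exists y, U y /\ f y = w) <-> (V w /\ exists y, f y = w).

(* bracket extended to E^{1 x k} x (E')^k *)
Definition pairv (X Y : Type) (b : X -> Y -> K) (k : nat)
  (x : 'I_k -> X) (y : 'I_k -> Y) : K := \sum_(i < k) b (x i) (y i).

End WeakTopology.

Section Algebra.
Variable K : numFieldType.
Variable A : algType K.

Definition is_domain : Prop := forall a b : A, a * b = 0 -> a = 0 \/ b = 0.

Definition left_ideal (I : A -> Prop) : Prop :=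
  [/\ I 0, forall x y, I x -> I y -> I (x + y) & forall a x, I x -> I (a * x)].
Definition right_ideal (I : A -> Prop) : Prop :=
  [/\ I 0, forall x y, I x -> I y -> I (x + y) & forall a x, I x -> I (x * a)].

(* Noetherian = left and right Noetherian: every one-sided ideal is
   finitely generated *)
Definition noetherian : Prop :=
  (forall I, left_ideal I -> exists n (g : 'I_n -> A),
      forall x, I x <-> exists c : 'I_n -> A, x = \sum_(i < n) c i * g i) /\
  (forall I, right_ideal I -> exists n (g : 'I_n -> A),
      forall x, I x <-> exists c : 'I_n -> A, x = \sum_(i < n) g i * c i).

Definition lmulv (E' : lmodType A) (k1 k2 : nat) (P : 'M[A]_(k1, k2))
  (y : 'I_k2 -> E') : 'I_k1 -> E' := fun i => \sum_(j < k2) P i j *: y j.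

Definition rmulv (E : zmodType) (ract : E -> A -> E) (k1 k2 : nat)
  (P : 'M[A]_(k1, k2)) (x : 'I_k1 -> E) : 'I_k2 -> E :=
  fun j => \sum_(i < k1) ract (x i) (P i j).

Definition injective_module (E' : lmodType A) : Prop :=
  forall (M N : lmodType A) (i : {linear M -> N}) (f : {linear M -> E'}),
    injective i -> exists g : {linear N -> E'}, forall m, g (i m) = f m.

Definition balanced (E : zmodType) (ract : E -> A -> E) (M : lmodType A)
  (G : zmodType) (beta : E -> M -> G) : Prop :=
  [/\ forall x x' m, beta (x + x') m = beta x m + beta x' m,
      forall x m m', beta x (m + m') = beta x m + beta x m'
    & forall x a m, beta (ract x a) m = beta x (a *: m)].

(* the element sum_k xs k (x) ms k of E (x)_A M is zero
   (tensor product characterised by its universal property) *)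
Definition tensor_zero (E : zmodType) (ract : E -> A -> E) (M : lmodType A)
  (n : nat) (xs : 'I_n -> E) (ms : 'I_n -> M) : Prop :=
  forall (G : zmodType) (beta : E -> M -> G), balanced ract beta ->
    \sum_(k < n) beta (xs k) (ms k) = 0.

(* flat right A-module: E (x)_A - preserves injections *)
Definition flat_module (E : zmodType) (ract : E -> A -> E) : Prop :=
  forall (M N : lmodType A) (i : {linear M -> N}), injective i ->
    forall n (xs : 'I_n -> E) (ms : 'I_n -> M),
      tensor_zero ract xs (fun k => i (ms k)) -> tensor_zero ract xs ms.

(* coker(.P) = A^{1 x k2} / A^{1 x k1} P is torsion-free as a left A-module *)
Definition coker_torsion_free (k1 k2 : nat) (P : 'M[A]_(k1, k2)) : Prop :=
  forall (a : A) (u : 'rV[A]_k2), a != 0 ->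
    (exists v : 'rV[A]_k1, a *: u = v *m P) -> exists w : 'rV[A]_k1, u = w *m P.

End Algebra.

From HB Require Import structures.
From mathcomp Require Import all_boot all_order all_algebra.
From mathcomp Require Import ring boolp.
Set Implicit Arguments. Unset Strict Implicit. Unset Printing Implicit Defensive.
Import Order.TTheory GRing.Theory Num.Theory.
Local Open Scope ring_scope.
Local Open Scope quotient_scope.

(* Both statements are instances of one abstract duality principle
   (section Duality): if f : D1 -> D2 has the adjoint g : C2 -> C1 with
   respect to pairings C1 x D1 -> K and C2 x D2 -> K, and if im g consists
   exactly of the functionals that are constant on the fibres of f
   ("im g = (ker f)^perp"), then im g is weakly closed and f is a strict
   morphism.  The key step [fiber_liftP] shows, by induction on the number
   of seminorms, that f maps weak neighbourhoods onto weak neighbourhoods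
   relative to im f.

   It remains to prove "im g = (ker f)^perp" in the two situations:
   (i)  f = . P1, g = P1 . : injectivity of E' extends the functional
        v P1 |-> sum_i v_i x_i from the row image of P1 to A^(1 x k2)
        [injective_image_orthogonal];
   (ii) f = P1 ., g = . P1 : over a Noetherian domain (Ore conditions
        [left_ore], Gaussian elimination [annihilator_rowspan], finite
        generation of syzygies [rsubmod_fingen]) a torsion-free cokernel
        yields an exact sequence A^(1 x k1) -P1-> A^(1 x k2) -Q-> A^(1 x k3)
        [syzygy]; flatness of E then shows that im(. P1) is the kernel of . Q
        on E^k2, using a balanced map into the quotient Z-module
        E^k2 / im(. P1) [flat_image_orthogonal].
   The theorem [lemma4] combines [injective_case] and [flat_case]. *)

Lemma pos_lower_bound (K : numFieldType) (a b : K) : 0 < a -> 0 < b ->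
  exists c, [/\ 0 < c, c <= a & c <= b].
Proof.
move=> a0 b0; have ab0 : 0 < a + b by rewrite addr_gt0.
exists (a * b / (a + b)); split; first by rewrite divr_gt0 ?mulr_gt0.
  by rewrite ler_pdivrMr // ler_pM2l // lerDr ltW.
by rewrite ler_pdivrMr // mulrC ler_pM2l // lerDl ltW.
Qed.

(* The affine structure
   of D1 and the linear structure of C1 are only used through the two
   operations [shift] and [comb]. *)
Section Duality.
Variables (K : numFieldType) (C1 D1 C2 D2 : Type).
Variables (b1 : C1 -> D1 -> K) (b2 : C2 -> D2 -> K) (f : D1 -> D2) (g : C2 -> C1).
Hypothesis adjoint : forall y z, b2 y (f z) = b1 (g y) z.

(* z + t (p - q), which stays in the fibre of z when p, q share a fibre *)
Variable shift : K -> D1 -> D1 -> D1 -> D1.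
Hypothesis shift_fiber : forall t z p q, f p = f q -> f (shift t z p q) = f z.
Hypothesis shift_pair :
  forall t z p q x, b1 x (shift t z p q) = b1 x z + t * (b1 x p - b1 x q).

(* x - c x' *)
Variable comb : K -> C1 -> C1 -> C1.
Hypothesis comb_pair : forall c x x' z, b1 (comb c x x') z = b1 x z - c * b1 x' z.

Definition fiber_constant (x : C1) : Prop :=
  forall p q, f p = f q -> b1 x p = b1 x q.

Lemma not_fiber_constant x : ~ fiber_constant x ->
  exists p q, f p = f q /\ b1 x p != b1 x q.
Proof.
move=> nx; apply: contra_notP nx => none p q fpq; apply/eqP.
by apply: contra_notT none => dpq; exists p, q.
Qed.

Hypothesis image_orthogonal : forall x, fiber_constant x -> exists y, g y = x.

(* The e-neighbourhood of y defined by the seminorms xs has an image under f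
   containing a whole weak neighbourhood of f y (intersected with im f). *)
Definition fiber_lift n (xs : 'I_n -> C1) (e : K) : Prop :=
  exists m (ys : 'I_m -> C2) e', 0 < e' /\ forall z y,
    (forall j, `|b2 (ys j) (f z) - b2 (ys j) (f y)| < e') ->
    exists z', f z' = f z /\ forall i, `|b1 (xs i) z' - b1 (xs i) y| < e.

Lemma fiber_lift0 (xs : 'I_0 -> C1) e : fiber_lift xs e.
Proof.
exists 0%N, (fun j : 'I_0 => False_rect C2 (Bool.diff_false_true (ltn_ord j))), 1.
by split=> // z y _; exists z; split=> // -[].
Qed.

(* A last seminorm that is constant on fibres comes from C2 and is simply
   added to the seminorms ys. *)
Lemma fiber_lift_image n (xs : 'I_n.+1 -> C1) e : 0 < e ->
  fiber_constant (xs ord_max) ->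
  fiber_lift (fun i => xs (lift ord_max i)) e -> fiber_lift xs e.
Proof.
move=> e0 /[dup] xc /image_orthogonal [y0 gy0] [m [ys [e' [e'0 lift_ys]]]].
have [e'' [e''0 e''e' e''e]] := pos_lower_bound e'0 e0.
exists m.+1, (fun j => if unlift ord_max j is Some j' then ys j' else y0), e''.
split=> // z y close.
have [z' [fz' near_z']] : exists z', f z' = f z /\
    forall i, `|b1 (xs (lift ord_max i)) z' - b1 (xs (lift ord_max i)) y| < e.
  apply: lift_ys => j; have := close (lift ord_max j).
  by rewrite liftK => /lt_le_trans; apply.
exists z'; split=> // i; case: (unliftP ord_max i) => [j ->|->]; first exact: near_z'.
have := close ord_max; rewrite unlift_none !adjoint gy0 (xc z' z fz').
by move=> /lt_le_trans; apply.
Qed.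

(* A last seminorm xn that separates two points p, q of a fibre is
   eliminated: the other seminorms are corrected by multiples of xn, and the
   value of xn is then adjusted by moving along the direction p - q. *)
Lemma fiber_lift_eliminate n (xs : 'I_n.+1 -> C1) e p q : 0 < e ->
  f p = f q -> b1 (xs ord_max) p != b1 (xs ord_max) q ->
  fiber_lift (fun i => let x := xs (lift ord_max i) in
    comb ((b1 x p - b1 x q) / (b1 (xs ord_max) p - b1 (xs ord_max) q)) x
         (xs ord_max)) e ->
  fiber_lift xs e.
Proof.
set xn := xs ord_max; set d := b1 xn p - b1 xn q.
move=> e0 fpq dpq [m [ys [e' [e'0 lift_ys]]]].
have d0 : d != 0 by rewrite subr_eq0.
exists m, ys, e'; split=> // z y /lift_ys [z' [fz' near_z']].
pose t := - (b1 xn z' - b1 xn y) / d.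
exists (shift t z' p q); split; first by rewrite shift_fiber.
move=> i; rewrite shift_pair; case: (unliftP ord_max i) => [j ->|->].
  move: (near_z' j) => /=; rewrite !comb_pair.
  set x := xs (lift ord_max j).
  suff -> : b1 x z' + t * (b1 x p - b1 x q) - b1 x y =
    b1 x z' - (b1 x p - b1 x q) / d * b1 xn z' -
    (b1 x y - (b1 x p - b1 x q) / d * b1 xn y) by [].
  by rewrite /t; field.
rewrite -/xn; suff -> : b1 xn z' + t * (b1 xn p - b1 xn q) - b1 xn y = 0 by rewrite normr0.
by rewrite /t -/d; field.
Qed.

(* f is open onto its image for the weak topologies *)
Lemma fiber_liftP n (xs : 'I_n -> C1) e : 0 < e -> fiber_lift xs e.
Proof.
move=> e0; elim: n xs => [|n IH] xs; first exact: fiber_lift0.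
have [xc|] := pselect (fiber_constant (xs ord_max)).
  exact: fiber_lift_image (IH _).
move=> /not_fiber_constant [p [q [fpq dpq]]].
exact: fiber_lift_eliminate e0 fpq dpq (IH _).
Qed.

(* continuity of f: the seminorm |b2 y (f .)| is |b1 (g y) .| *)
Lemma dual_continuous : wcontinuous b1 b2 f.
Proof.
move=> V oV y Vy; have [n [xs [e [e0 H]]]] := oV _ Vy.
exists n, (fun i => g (xs i)), e; split=> // z Hz; apply: H => i.
by rewrite !adjoint.
Qed.

(* im g is closed: a point x outside separates two points of a fibre,
   which yields a neighbourhood of x of functionals that are not
   fibre-constant. *)
Lemma dual_image_closed : wclosed (tpair b1) (fun x => exists y, g y = x).
Proof.
move=> x /(contra_not (image_orthogonal (x := x))) /not_fiber_constant.
move=> [p [q [fpq dpq]]].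
set d := b1 x p - b1 x q.
have d0 : 0 < `|d| by rewrite normr_gt0 subr_eq0.
exists 2%N, (fun i : 'I_2 => if i == ord0 then p else q), (`|d| / 2).
split; first by rewrite divr_gt0.
move=> z near_x [y gy].
have zpq : b1 z p = b1 z q by rewrite -gy -!adjoint fpq.
have := near_x ord0; have := near_x (lift ord0 ord0); rewrite /tpair /= => nq np.
have : `|d| <= `|b1 z p - b1 x p| + `|b1 z q - b1 x q|.
  rewrite -[X in _ <= X + _]normrN; apply: le_trans (ler_normD _ _).
  by rewrite /d zpq le_eqVlt; apply/orP; left; apply/eqP; congr `|_|; ring.
by move=> /le_lt_trans /(_ (ltrD np nq)); rewrite -splitr ltxx.
Qed.

(* The image of a saturated open set U is cut out of im f by the open set V
   of points having a neighbourhood whose trace on im f lies in f(U);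
   [fiber_liftP] shows that f(U) is contained in V. *)
Lemma dual_strict : strict_morphism b1 b2 f.
Proof.
split; first exact: dual_continuous.
move=> U oU satU.
pose V w := exists n (ys : 'I_n -> C2) e, 0 < e /\ forall w',
  (forall j, `|b2 (ys j) w' - b2 (ys j) w| < e) -> (exists y, f y = w') ->
  exists y, U y /\ f y = w'.
exists V; split.
  move=> w [n [ys [e [e0 H]]]]; have e20 : 0 < e / 2 by rewrite divr_gt0.
  exists n, ys, (e / 2); split=> // w1 near_w1; exists n, ys, (e / 2).
  split=> // w' near_w'; apply: H => j.
  rewrite -(subrKA (b2 (ys j) w1)) (splitr e).
  exact: le_lt_trans (ler_normD _ _) (ltrD (near_w' j) (near_w1 j)).
move=> w; split.
  move=> [y [Uy fy]]; split; last by exists y.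
  have [n [xs [e [e0 HU]]]] := oU _ Uy.
  have [m [ys [e' [e'0 lift_ys]]]] := fiber_liftP xs e0.
  exists m, ys, e'; split=> // w' near_w' [z fz].
  have [z' [fz' near_z']] : exists z', f z' = f z /\
      forall i, `|b1 (xs i) z' - b1 (xs i) y| < e.
    by apply: lift_ys => j; rewrite fz fy.
  by exists z'; split; [exact: HU | rewrite fz'].
by move=> [[n [ys [e [e0 H]]]] Hw]; apply: H Hw => j; rewrite subrr normr0.
Qed.

End Duality.

(* The quotient V / S of a Z-module by an (undecidable) subgroup S.
   Congruence modulo S is made boolean by classical choice. *)
Section Quotient.
Variables (V : zmodType) (S : V -> Prop).
Hypotheses (S0 : S 0) (SB : forall a b, S a -> S b -> S (a - b)).

Lemma subgroupN a : S a -> S (- a).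
Proof. by move=> Sa; rewrite -sub0r; apply: SB. Qed.
Lemma subgroupD a b : S a -> S b -> S (a + b).
Proof. by move=> Sa Sb; rewrite -[b]opprK; apply/SB/subgroupN. Qed.

Definition congr_mod : rel V := fun a b => `[< S (a - b) >].

Lemma congr_mod_equiv : equiv_class_of congr_mod.
Proof.
split=> [a|a b|b a c]; rewrite /congr_mod.
- by apply/asboolP; rewrite subrr.
- by apply/asboolP/asboolP => /subgroupN; rewrite opprB.
- move=> /asboolP Sab /asboolP Sbc; apply/asboolP.
  by rewrite -(subrKA b); apply: subgroupD.
Qed.

Canonical congr_mod_rel := EquivRelPack congr_mod_equiv.

Definition quo := {eq_quot congr_mod}.
HB.instance Definition _ := Choice.on quo.
HB.instance Definition _ := EqQuotient.on quo.

Lemma quo_eqP a b : \pi_quo a = \pi_quo b <-> S (a - b).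
Proof. by split=> [/eqquotP/asboolP|Sab]; [|apply/eqquotP/asboolP]. Qed.

Definition quo_add : quo -> quo -> quo := lift_op2 quo +%R.
Definition quo_opp : quo -> quo := lift_op1 quo -%R.

Lemma quo_addE a b : quo_add (\pi_quo a) (\pi_quo b) = \pi_quo (a + b).
Proof.
unlock quo_add; apply/quo_eqP; rewrite opprD addrACA.
by apply: subgroupD; apply/quo_eqP; rewrite reprK.
Qed.

Lemma quo_oppE a : quo_opp (\pi_quo a) = \pi_quo (- a).
Proof.
by unlock quo_opp; apply/quo_eqP; rewrite -opprD; apply/subgroupN/quo_eqP; rewrite reprK.
Qed.

Lemma quo_addA : associative quo_add.
Proof. by elim/quotW=> a; elim/quotW=> b; elim/quotW=> c; rewrite !quo_addE addrA. Qed.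
Lemma quo_addC : commutative quo_add.
Proof. by elim/quotW=> a; elim/quotW=> b; rewrite !quo_addE addrC. Qed.
Lemma quo_add0 : left_id (\pi_quo 0) quo_add.
Proof. by move=> x; elim/quotW: x => a; rewrite quo_addE add0r. Qed.
Lemma quo_addN : left_inverse (\pi_quo 0) quo_opp quo_add.
Proof. by move=> x; elim/quotW: x => a; rewrite quo_oppE quo_addE addNr. Qed.

HB.instance Definition _ := GRing.isZmodule.Build quo quo_addA quo_addC quo_add0 quo_addN.

Lemma quo_piD a b : \pi_quo (a + b) = \pi_quo a + \pi_quo b.
Proof. by rewrite -quo_addE. Qed.

Lemma quo_pi_sum n (F : 'I_n -> V) : \pi_quo (\sum_i F i) = \sum_i \pi_quo (F i).
Proof. by elim/big_rec2: _ => // i a b _ <-; rewrite quo_piD. Qed.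

Lemma quo_pi_eq0 a : \pi_quo a = 0 -> S a.
Proof. by move/quo_eqP; rewrite subr0. Qed.

End Quotient.

(* The left Ore condition in a left Noetherian domain.  Rings are arbitrary
   here (not K-algebras) so that the results apply to the opposite ring. *)
Section LeftOre.
Variable R : nzRingType.
Hypothesis domR : forall a b : R, a * b = 0 -> a = 0 \/ b = 0.

Definition lideal (I : R -> Prop) : Prop :=
  [/\ I 0, forall x y, I x -> I y -> I (x + y) & forall a x, I x -> I (a * x)].

Hypothesis lnoeth : forall I, lideal I -> exists n (g : 'I_n -> R),
  forall x, I x <-> exists c : 'I_n -> R, x = \sum_(i < n) c i * g i.

Lemma lideal_sum I n (c g : 'I_n -> R) : lideal I -> (forall i, I (g i)) ->
  I (\sum_(i < n) c i * g i).
Proof.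
case=> I0 ID IM Ig; elim/big_rec: _ => // i x _ Ix.
by apply: ID => //; apply: IM.
Qed.

Lemma lideal_chain_stationary (J : nat -> R -> Prop) :
  (forall N, lideal (J N)) -> (forall N M x, (N <= M)%N -> J N x -> J M x) ->
  exists N, forall M x, J M x -> J N x.
Proof.
move=> Jideal Jmono; pose I x := exists N, J N x.
have Iideal : lideal I.
  split; first by exists 0%N; case: (Jideal 0%N).
    move=> x y [N Jx] [M Jy]; exists (maxn N M); case: (Jideal (maxn N M)) => _ + _.
    by apply; [apply: Jmono Jx; apply: leq_maxl | apply: Jmono Jy; apply: leq_maxr].
  by move=> a x [N Jx]; exists N; case: (Jideal N) => _ _; apply.
have [n [g gen]] := lnoeth Iideal.
have /choice [Ng JNg] : forall i, exists N, J N (g i).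
  move=> i; apply/gen; exists (fun j => (j == i)%:R).
  by rewrite (bigD1 i) //= eqxx mul1r big1 ?addr0 // => j /negbTE ->; rewrite mul0r.
exists (\max_(i < n) Ng i)%N => M x /(ex_intro (fun N => J N x) M) /gen [c ->].
by apply: lideal_sum => // i; apply: Jmono (JNg i); apply: leq_bigmax.
Qed.

Section Powers.
Variables (a b : R).

Definition powers_span N (x : R) : Prop :=
  exists c : nat -> R, x = \sum_(n < N) c n * (b * a ^+ n).

Lemma powers_span_ideal N : lideal (powers_span N).
Proof.
split; first by exists (fun _ => 0); rewrite big1 // => n _; rewrite mul0r.
  move=> x y [c ->] [c' ->]; exists (fun n => c n + c' n).
  by rewrite -big_split; apply: eq_bigr => n _; rewrite mulrDl.
move=> al x [c ->]; exists (fun n => al * c n).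
by rewrite mulr_sumr; apply: eq_bigr => n _; rewrite mulrA.
Qed.

Lemma powers_span_mono N M x : (N <= M)%N -> powers_span N x -> powers_span M x.
Proof.
move=> NM [c ->]; exists (fun n => if (n < N)%N then c n else 0).
rewrite (big_ord_widen _ (fun n => c n * (b * a ^+ n)) NM) big_mkcond /=.
by apply: eq_bigr => n _; case: ifP => // _; rewrite mul0r.
Qed.

Lemma powers_independent : b != 0 ->
  (forall al be : R, al * a = be * b -> al = 0) ->
  forall N (e : nat -> R), \sum_(n < N) e n * (b * a ^+ n) = 0 ->
  forall n, (n < N)%N -> e n = 0.
Proof.
move=> b0 no_common; elim=> [//|N IH] e; rewrite big_ord_recl /= expr0 mulr1.
have -> : \sum_(i < N) e (bump 0 i) * (b * a ^+ bump 0 i) =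
    (\sum_(i < N) e i.+1 * (b * a ^+ i)) * a.
  by rewrite mulr_suml; apply: eq_bigr => i _; rewrite exprSr !mulrA.
set X := \sum_(i < N) _ => sum0.
have Xa : (- X) * a = e 0%N * b.
  by rewrite mulNr; apply/eqP; rewrite eq_sym -subr_eq0 opprK sum0.
have X0 : X = 0 by apply/eqP; rewrite -oppr_eq0 (no_common _ _ Xa).
have e0 : e 0%N = 0.
  by move: Xa; rewrite X0 oppr0 mul0r => /esym /domR [] // /eqP; rewrite (negbTE b0).
by case=> [//|n]; rewrite ltnS; apply: (IH (fun n => e n.+1)).
Qed.

End Powers.

(* Left Noetherian domains satisfy the left Ore condition: the chain of the
   ideals [powers_span N] stabilises, so b a^N is a combination of lower
   powers, which contradicts [powers_independent]. *)
Lemma left_ore (a b : R) : b != 0 -> exists al be, al != 0 /\ al * a = be * b.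
Proof.
move=> b0; apply: contrapT => none.
have no_common al be : al * a = be * b -> al = 0.
  by move=> e; apply/eqP; apply: contra_notT none => al0; exists al, be.
have [N stat] := lideal_chain_stationary (@powers_span_ideal a b)
  (@powers_span_mono a b).
have : powers_span a b N.+1 (b * a ^+ N).
  exists (fun n => (n == N)%:R); rewrite big_ord_recr /= eqxx mul1r big1 ?add0r //.
  by move=> i _; rewrite ltn_eqF // mul0r.
move=> /stat [c baN].
have := @powers_independent a b b0 no_common N.+1
  (fun n => if (n < N)%N then c n else - (n == N)%:R).
rewrite big_ord_recr /= ltnn eqxx mulN1r.
under eq_bigr do rewrite ltn_ord.
rewrite -baN subrr => /(_ erefl N (ltnSn N)); rewrite ltnn eqxx => /eqP.
by rewrite oppr_eq0 oner_eq0.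
Qed.

End LeftOre.

Section Elimination.
Variable R : nzRingType.
Hypothesis domR : forall a b : R, a * b = 0 -> a = 0 \/ b = 0.
Hypothesis lore : forall a b : R, b != 0 -> exists al be, al != 0 /\ al * a = be * b.
Hypothesis rore : forall a b : R, b != 0 -> exists s ga, s != 0 /\ b * ga = a * s.

Lemma dom_mulf_neq0 (a b : R) : a != 0 -> b != 0 -> a * b != 0.
Proof.
by move=> a0 b0; apply/eqP => /domR [] /eqP; rewrite ?(negbTE a0) ?(negbTE b0).
Qed.

Lemma dom_mulIf (a b : R) : b != 0 -> a * b = 0 -> a = 0.
Proof. by move=> b0 /domR [//|/eqP]; rewrite (negbTE b0). Qed.

Lemma dom_mulfI (a b : R) : a != 0 -> a * b = 0 -> b = 0.
Proof. by move=> a0 /domR [/eqP|//]; rewrite (negbTE a0). Qed.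

Variables (k1 k2 : nat).

Definition solution (T : {set 'I_k2}) (P : 'I_k1 -> 'I_k2 -> R) (c : 'I_k2 -> R) :=
  forall i, \sum_(j in T) P i j * c j = 0.

Definition annihilates (T : {set 'I_k2}) (P : 'I_k1 -> 'I_k2 -> R) (u : 'I_k2 -> R) :=
  forall c, solution T P c -> \sum_(j in T) u j * c j = 0.

Definition rowspan_upto (T : {set 'I_k2}) (P : 'I_k1 -> 'I_k2 -> R) (u : 'I_k2 -> R) :=
  exists a (v : 'I_k1 -> R), a != 0 /\
    {in T, forall j, a * u j = \sum_i v i * P i j}.

Lemma sum_delta (T : {set 'I_k2}) (F : 'I_k2 -> R) j0 : j0 \in T ->
  \sum_(j in T) F j * (j == j0)%:R = F j0.
Proof.
move=> j0T; rewrite (big_setD1 j0) //= eqxx mulr1 big1 ?addr0 //.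
by move=> j; rewrite !inE => /andP [/negbTE -> _]; rewrite mulr0.
Qed.

(* A zero column can be dropped: it forces the corresponding entry of u to
   vanish. *)
Lemma elim_zero_column (T : {set 'I_k2}) (P : 'I_k1 -> 'I_k2 -> R)
  (u : 'I_k2 -> R) j0 : j0 \in T -> (forall i, P i j0 = 0) ->
  annihilates T P u ->
  (annihilates (T :\ j0) P u -> rowspan_upto (T :\ j0) P u) ->
  rowspan_upto T P u.
Proof.
move=> j0T Pj0 ann IH.
have u0 : u j0 = 0.
  by rewrite -(sum_delta u j0T); apply: ann => i; rewrite sum_delta.
have [a [v [a0 av]]] : rowspan_upto (T :\ j0) P u.
  apply: IH => c sol; have := ann c.
  rewrite (big_setD1 j0) //= u0 mul0r add0r; apply=> i.
  by rewrite (big_setD1 j0) //= Pj0 mul0r add0r sol.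
exists a, v; split=> // j jT; have [->|jj0] := eqVneq j j0.
  by rewrite u0 mulr0 big1 // => i _; rewrite Pj0 mulr0.
by apply: av; rewrite !inE jj0.
Qed.

Section Pivot.
Variables (T : {set 'I_k2}) (P : 'I_k1 -> 'I_k2 -> R) (u : 'I_k2 -> R).
Variables (j0 : 'I_k2) (r : 'I_k1).
Hypotheses (j0T : j0 \in T) (p0 : P r j0 != 0).
Variables (al be : 'I_k1 -> R) (alu beu : R).
Hypotheses (al0 : forall i, al i != 0) (alP : forall i, al i * P i j0 = be i * P r j0).
Hypotheses (alu0 : alu != 0) (aluP : alu * u j0 = beu * P r j0).

Definition reduced_rows i j := al i * P i j - be i * P r j.
Definition reduced_row j := alu * u j - beu * P r j.

Lemma sum_reduced (T0 : {set 'I_k2}) (x y : R) (q c : 'I_k2 -> R) :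
  \sum_(j in T0) (x * q j - y * P r j) * c j =
  x * \sum_(j in T0) q j * c j - y * \sum_(j in T0) P r j * c j.
Proof.
rewrite !mulr_sumr -sumrB; apply: eq_bigr => j _.
by rewrite mulrBl !mulrA.
Qed.

(* A solution c of the reduced system extends to a solution of P: its
   entries are scaled by s and the pivot entry ga is found by right Ore. *)
Lemma extended_solution (c : 'I_k2 -> R) (s ga : R) (q : 'I_k2 -> R) (x y : R) :
  P r j0 * ga = - (\sum_(j in T :\ j0) P r j * c j) * s ->
  x * q j0 = y * P r j0 ->
  x * \sum_(j in T) q j * (if j == j0 then ga else c j * s) =
  (\sum_(j in T :\ j0) (x * q j - y * P r j) * c j) * s.
Proof.
move=> pga xq; rewrite (big_setD1 j0) //= eqxx mulrDr mulrA xq -mulrA pga.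
rewrite sum_reduced mulrBl mulNr mulrN addrC; congr (_ - _); last by rewrite mulrA.
rewrite -mulrA mulr_suml; congr (x * _); apply: eq_bigr => j.
by rewrite !inE => /andP [/negbTE -> _]; rewrite !mulrA.
Qed.

(* orthogonality passes to the reduced system: the extension of a reduced
   solution is orthogonal to u, and the Ore factors cancel in a domain *)
Lemma reduced_annihilates : annihilates T P u ->
  annihilates (T :\ j0) reduced_rows reduced_row.
Proof.
move=> ann c sol.
have [s [ga [s0 pga]]] := rore (- \sum_(j in T :\ j0) P r j * c j) p0.
pose c' j := if j == j0 then ga else c j * s.
have sol' : solution T P c'.
  move=> i; apply: (dom_mulfI (al0 i)).
  by rewrite (extended_solution pga (alP i)) sol mul0r.
have := ann c' sol' => /(congr1 (fun z => alu * z)).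
by rewrite (extended_solution pga aluP) mulr0 => /(dom_mulIf s0).
Qed.

(* a combination w of the rows of P giving a nonzero multiple of u is
   recovered from one of the reduced rows giving a multiple of the reduced
   row: w = v al + (a beu - v be) e_r *)
Lemma pivot_lift : rowspan_upto (T :\ j0) reduced_rows reduced_row ->
  rowspan_upto T P u.
Proof.
move=> [a [v [a0 av]]].
have av' : {in T, forall j, a * reduced_row j = \sum_i v i * reduced_rows i j}.
  move=> j jT; have [->|jj0] := eqVneq j j0; last by apply: av; rewrite !inE jj0.
  rewrite /reduced_row aluP subrr mulr0 big1 // => i _.
  by rewrite /reduced_rows alP subrr mulr0.
pose w i := v i * al i + (if i == r then a * beu - \sum_i' v i' * be i' else 0).
exists (a * alu), w; split=> [|j jT]; first exact: dom_mulf_neq0.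
rewrite /w; under eq_bigr do rewrite mulrDl.
rewrite big_split /= [X in _ + X](bigD1 r) //= eqxx.
rewrite [X in _ + (_ + X)]big1 ?addr0 => [|i /negbTE ->]; last by rewrite mul0r.
have -> : \sum_i v i * al i * P i j =
    \sum_i v i * reduced_rows i j + (\sum_i v i * be i) * P r j.
  rewrite mulr_suml -big_split /=; apply: eq_bigr => i _.
  by rewrite /reduced_rows mulrBr !mulrA subrK.
rewrite -av' // /reduced_row mulrBr mulrBl !mulrA.
by rewrite addrAC subrKA subrK.
Qed.

End Pivot.

(* If u annihilates all solutions of P then a nonzero multiple of u lies in
   the row space of P: Gaussian elimination over an Ore domain, by
   induction on the number of columns. *)
Theorem annihilator_rowspan (T : {set 'I_k2}) (P : 'I_k1 -> 'I_k2 -> R)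
  (u : 'I_k2 -> R) : annihilates T P u -> rowspan_upto T P u.
Proof.
have [n] := ubnP #|T|; elim: n T P u => // n IH T P u.
have [-> _ _|[j0 j0T] sizeT] := set_0Vmem T.
  by exists 1, (fun _ => 0); split=> [|j]; rewrite ?oner_neq0 ?inE.
have IH' P' u' : annihilates (T :\ j0) P' u' -> rowspan_upto (T :\ j0) P' u'.
  by apply: IH; move: sizeT; rewrite (cardsD1 j0 T) j0T.
have [Pj0|/existsNP [r /eqP p0] ann] := pselect (forall i, P i j0 = 0).
  by move=> ann; apply: (elim_zero_column j0T Pj0 ann (IH' P u)).
have /choice [ab abP] : forall i, exists ab : R * R,
    ab.1 != 0 /\ ab.1 * P i j0 = ab.2 * P r j0.
  by move=> i; have [al [be []]] := lore (P i j0) p0; exists (al, be).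
have [alu [beu [alu0 aluP]]] := lore (u j0) p0.
have alP i : (ab i).1 * P i j0 = (ab i).2 * P r j0 by case: (abP i).
have al0 i : (ab i).1 != 0 by case: (abP i).
apply: (pivot_lift alP alu0 aluP); apply: IH'.
exact: reduced_annihilates.
Qed.

End Elimination.

Section RightFinGen.
Variable R : nzRingType.
Hypothesis rnoeth : forall I : R -> Prop,
  [/\ I 0, forall x y, I x -> I y -> I (x + y) & forall a x, I x -> I (x * a)] ->
  exists n (g : 'I_n -> R),
    forall x, I x <-> exists c : 'I_n -> R, x = \sum_(i < n) g i * c i.

Variable k : nat.

Definition rsubmod (S : ('I_k -> R) -> Prop) : Prop :=
  [/\ S (fun _ => 0), forall u v, S u -> S v -> S (fun j => u j + v j)
    & forall u a, S u -> S (fun j => u j * a)].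

Definition finitely_generated (S : ('I_k -> R) -> Prop) : Prop :=
  exists n (gens : 'I_n -> 'I_k -> R), (forall l, S (gens l)) /\
    forall c, S c -> exists b : 'I_n -> R, forall j, c j = \sum_(l < n) gens l j * b l.

Lemma rsubmod_comb S n (F : 'I_n -> 'I_k -> R) (b : 'I_n -> R) :
  rsubmod S -> (forall i, S (F i)) -> S (fun j => \sum_(i < n) F i j * b i).
Proof.
case=> S0 SD SZ SF; elim: n F b SF => [|n IH] F b SF.
  by under [fun j => _]funext do rewrite big_ord0.
under [fun j => _]funext do rewrite big_ord_recr /=.
by apply: SD; [apply: (IH (fun i => F (widen_ord (leqnSn n) i))) | apply: SZ].
Qed.

Lemma rsubmodB S u v : rsubmod S -> S u -> S v -> S (fun j => u j - v j).
Proof.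
case=> S0 SD SZ Su Sv.
by under [fun j => u j - _]funext do rewrite -mulrN1; apply/SD/SZ.
Qed.

(* If the elements of S vanishing at j0 form a finitely generated module,
   so does S: the values at j0 form a finitely generated right ideal. *)
Lemma fingen_step S j0 : rsubmod S ->
  finitely_generated (fun c => S c /\ c j0 = 0) -> finitely_generated S.
Proof.
move=> /[dup] Ssub [S0 SD SZ] [m [h [Sh gen_h]]].
have [n [g gen_g]] : exists n (g : 'I_n -> R),
    forall x, (exists c, S c /\ c j0 = x) <-> exists d, x = \sum_(i < n) g i * d i.
  apply: rnoeth; split; first by exists (fun _ => 0).
    move=> x y [c [Sc <-]] [c' [Sc' <-]].
    by exists (fun j => c j + c' j); split=> //; apply: SD.
  by move=> a x [c [Sc <-]]; exists (fun j => c j * a); split=> //; apply: SZ.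
have /choice [s Ss] : forall i, exists c, S c /\ c j0 = g i.
  move=> i; apply/gen_g; exists (fun l => (l == i)%:R).
  by rewrite (bigD1 i) //= eqxx mulr1 big1 ?addr0 // => l /negbTE ->; rewrite mulr0.
exists (n + m)%N, (fun l => match split l with inl i => s i | inr i => h i end).
split=> [l|c Sc]; first by case: (split l) => i; [case: (Ss i) | case: (Sh i)].
have [d cj0] : exists d, c j0 = \sum_(i < n) g i * d i by apply/gen_g; exists c.
pose c' j := c j - \sum_(i < n) s i j * d i.
have [b' c'b'] : exists b', forall j, c' j = \sum_(l < m) h l j * b' l.
  apply: gen_h; split.
    by apply: rsubmodB => //; apply: rsubmod_comb => // i; case: (Ss i).
  rewrite /c' cj0; apply/eqP; rewrite subr_eq0; apply/eqP/eq_bigr => i _.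
  by case: (Ss i) => _ ->.
exists (fun l => match split l with inl i => d i | inr i => b' i end) => j.
have -> : c j = \sum_(i < n) s i j * d i + c' j by rewrite /c' addrC subrK.
rewrite big_split_ord /= c'b'; congr (_ + _); apply: eq_bigr => i _.
  by rewrite (unsplitK (inl i)).
by rewrite (unsplitK (inr i)).
Qed.

(* induction on a set of coordinates outside which S vanishes *)
Lemma rsubmod_fingen S : rsubmod S -> finitely_generated S.
Proof.
suff fg_supp (T : {set 'I_k}) S' : rsubmod S' ->
    (forall c, S' c -> forall j, j \notin T -> c j = 0) -> finitely_generated S'.
  by move=> Ssub; apply: (fg_supp setT) => // c _ j; rewrite inE.
have [n] := ubnP #|T|; elim: n T S' => // n IH T S' sizeT Ssub supp.
have [T0|[j0 j0T]] := set_0Vmem T.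
  exists 0%N, (fun l _ => 0); split=> [[] //|c Sc].
  by exists (fun _ => 0) => j; rewrite big_ord0 (supp c Sc) // T0 inE.
apply: (fingen_step (j0 := j0) Ssub); apply: (IH (T :\ j0)).
- by move: sizeT; rewrite (cardsD1 j0 T) j0T.
- case: Ssub => S0 SD SZ; split=> //.
    by move=> u v [Su u0] [Sv v0]; split; [apply: SD | rewrite /= u0 v0 addr0].
  by move=> u a [Su u0]; split; [apply: SZ | rewrite /= u0 mul0r].
move=> c [Sc cj0] j; rewrite !inE negb_and negbK.
by case/orP => [/eqP -> //|]; apply: supp.
Qed.

End RightFinGen.

Section RowImage.
Variables (R : nzRingType) (m n : nat) (P : 'M[R]_(m, n)).

Definition in_rowimage : pred 'rV[R]_n :=
  fun u => `[< exists v : 'rV[R]_m, u = v *m P >].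

Lemma rowimage_submod_closed : submod_closed in_rowimage.
Proof.
split=> [|a u w /asboolP [v ->] /asboolP [v' ->]]; apply/asboolP.
  by exists 0; rewrite mul0mx.
by exists (a *: v + v'); rewrite mulmxDl scalemxAl.
Qed.

HB.instance Definition _ :=
  GRing.isSubmodClosed.Build R 'rV[R]_n in_rowimage rowimage_submod_closed.

Record rowimage := RowImage { rowimage_val :> 'rV[R]_n; _ : in_rowimage rowimage_val }.
HB.instance Definition _ := [isSub for rowimage_val].
HB.instance Definition _ := [Choice of rowimage by <:].
HB.instance Definition _ := [SubChoice_isSubLmodule of rowimage by <:].

Lemma in_rowimage_mul (v : 'rV[R]_m) : in_rowimage (v *m P).
Proof. by apply/asboolP; exists v. Qed.

Definition to_rowimage (v : 'rV[R]_m) : rowimage := RowImage (in_rowimage_mul v).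

Definition rowimage_pick (u : rowimage) : 'rV[R]_m :=
  projT1 (cid (asboolW (valP u))).

Lemma rowimage_pickP (u : rowimage) : val u = rowimage_pick u *m P.
Proof. by rewrite /rowimage_pick; case: cid. Qed.
End RowImage.

Lemma sum_setT (V : nmodType) n (F : 'I_n -> V) :
  \sum_(j in [set: 'I_n]) F j = \sum_j F j.
Proof. by apply: eq_bigl => j; rewrite inE. Qed.

Section Syzygy.
Variables (K : numFieldType) (A : algType K).
Hypotheses (domA : is_domain A) (noethA : noetherian A).

Lemma left_ore_alg (a b : A) : b != 0 -> exists al be, al != 0 /\ al * a = be * b.
Proof. exact: (@left_ore A domA noethA.1). Qed.

(* the right Ore condition is the left one in the opposite ring *)
Lemma right_ore_alg (a b : A) : b != 0 -> exists s ga, s != 0 /\ b * ga = a * s.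
Proof.
have domAc (x y : A^c) : x * y = 0 -> x = 0 \/ y = 0.
  by move=> /domA [] ->; [right | left].
by move=> b0; have [s [ga []]] := @left_ore A^c domAc noethA.2 a b b0; exists s, ga.
Qed.

Lemma syzygy k1 k2 (P : 'M[A]_(k1, k2)) : coker_torsion_free P ->
  exists k3 (Q : 'M[A]_(k2, k3)), P *m Q = 0 /\
    forall w : 'rV[A]_k2, w *m Q = 0 -> exists z, w = z *m P.
Proof.
move=> tf; pose S := solution [set: 'I_k2] (fun i j => P i j).
have Ssub : rsubmod S.
  split=> [i|u v Su Sv i|u a Su i].
  - by rewrite big1 // => j _; rewrite mulr0.
  - by under eq_bigr do rewrite mulrDr; rewrite big_split /= Su Sv addr0.
  - by under eq_bigr do rewrite mulrA; rewrite -mulr_suml Su mul0r.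
have [k3 [gens [Sgens gen]]] := rsubmod_fingen noethA.2 Ssub.
exists k3, (\matrix_(j, l) gens l j); split.
  apply/matrixP => i l; rewrite !mxE -[RHS](Sgens l i) sum_setT.
  by apply: eq_bigr => j _; rewrite mxE.
move=> w wQ.
have wgens l : \sum_(j in [set: 'I_k2]) w 0 j * gens l j = 0.
  move/matrixP/(_ 0 l): wQ; rewrite !mxE sum_setT => wl; rewrite -[RHS]wl.
  by apply: eq_bigr => j _; rewrite mxE.
have ann : annihilates [set: 'I_k2] (fun i j => P i j) (fun j => w 0 j).
  move=> c /gen [b cb]; under eq_bigr do rewrite cb mulr_sumr.
  rewrite exchange_big big1 // => l _.
  by under eq_bigr do rewrite mulrA; rewrite -mulr_suml wgens mul0r.
have [a [v [a0 av]]] := annihilator_rowspan domA left_ore_alg right_ore_alg ann.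
apply: (tf a) => //; exists (\row_i v i).
by apply/rowP => j; rewrite !mxE av ?inE //; apply: eq_bigr => i _; rewrite mxE.
Qed.

End Syzygy.

(* The dual pair (E, E'), with E a right A-module through the transposed
   action ract. *)
Section Pairing.
Variables (K : numFieldType) (A : algType K) (E : lmodType K) (E' : lmodType A).
Variables (pr : E -> E' -> K) (ract : E -> A -> E).
Hypothesis bil1 : forall (c : K) x x2 y, pr (c *: x + x2) y = c * pr x y + pr x2 y.
Hypothesis bil2 : forall (c : K) x y y2, pr x (c%:A *: y + y2) = c * pr x y + pr x y2.
Hypothesis nd1 : forall x, (forall y, pr x y = 0) -> x = 0.
Hypothesis nd2 : forall y, (forall x, pr x y = 0) -> y = 0.
Hypothesis ractP : forall x a y, pr (ract x a) y = pr x (a *: y).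

Lemma prDl x x' y : pr (x + x') y = pr x y + pr x' y.
Proof. by have := bil1 1 x x' y; rewrite scale1r mul1r. Qed.
Lemma pr0l y : pr 0 y = 0.
Proof. by apply: (addrI (pr 0 y)); rewrite -prDl !addr0. Qed.
Lemma prZl c x y : pr (c *: x) y = c * pr x y.
Proof. by have := bil1 c x 0 y; rewrite addr0 pr0l addr0. Qed.
Lemma prBl x x' y : pr (x - x') y = pr x y - pr x' y.
Proof. by rewrite prDl -scaleN1r prZl mulN1r. Qed.
Lemma pr_suml n (F : 'I_n -> E) y : pr (\sum_i F i) y = \sum_i pr (F i) y.
Proof. by elim/big_rec2: _ => [|i a b _ <-]; rewrite ?pr0l // prDl. Qed.

Lemma prDr x y y' : pr x (y + y') = pr x y + pr x y'.
Proof. by have := bil2 1 x y y'; rewrite scale1r scale1r mul1r. Qed.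
Lemma pr0r x : pr x 0 = 0.
Proof. by apply: (addrI (pr x 0)); rewrite -prDr !addr0. Qed.
Lemma prZr c x y : pr x (c%:A *: y) = c * pr x y.
Proof. by have := bil2 c x y 0; rewrite addr0 pr0r addr0. Qed.
Lemma prBr x y y' : pr x (y - y') = pr x y - pr x y'.
Proof. by apply: (addIr (pr x y')); rewrite -prDr !subrK. Qed.
Lemma pr_sumr n x (F : 'I_n -> E') : pr x (\sum_i F i) = \sum_i pr x (F i).
Proof. by elim/big_rec2: _ => [|i a b _ <-]; rewrite ?pr0r // prDr. Qed.

Lemma pr_injl x x' : (forall y, pr x y = pr x' y) -> x = x'.
Proof.
by move=> h; apply/eqP; rewrite -subr_eq0; apply/eqP/nd1 => y; rewrite prBl h subrr.
Qed.
Lemma pr_injr y y' : (forall x, pr x y = pr x y') -> y = y'.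
Proof.
by move=> h; apply/eqP; rewrite -subr_eq0; apply/eqP/nd2 => x; rewrite prBr h subrr.
Qed.

(* By nondegeneracy, the transposed action makes E a right A-module. *)
Lemma ractDl x x' a : ract (x + x') a = ract x a + ract x' a.
Proof. by apply: pr_injl => y; rewrite ractP !prDl !ractP. Qed.
Lemma ractZl (c : K) x a : ract (c *: x) a = c *: ract x a.
Proof. by apply: pr_injl => y; rewrite ractP !prZl ractP. Qed.
Lemma ract0l a : ract 0 a = 0.
Proof. by apply: pr_injl => y; rewrite ractP !pr0l. Qed.
Lemma ractBl x x' a : ract (x - x') a = ract x a - ract x' a.
Proof. by apply: pr_injl => y; rewrite ractP !prBl !ractP. Qed.
Lemma ractDr x a b : ract x (a + b) = ract x a + ract x b.
Proof. by apply: pr_injl => y; rewrite ractP prDl !ractP scalerDl prDr. Qed.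
Lemma ract0r x : ract x 0 = 0.
Proof. by apply: pr_injl => y; rewrite ractP scale0r pr0r pr0l. Qed.
Lemma ractBr x a b : ract x (a - b) = ract x a - ract x b.
Proof. by apply: pr_injl => y; rewrite ractP prBl !ractP scalerBl prBr. Qed.
Lemma ractA x a b : ract (ract x a) b = ract x (a * b).
Proof. by apply: pr_injl => y; rewrite !ractP scalerA. Qed.
Lemma ract1 x : ract x 1 = x.
Proof. by apply: pr_injl => y; rewrite ractP scale1r. Qed.
Lemma ract_sumr n x (F : 'I_n -> A) : ract x (\sum_i F i) = \sum_i ract x (F i).
Proof. by elim/big_rec2: _ => [|i a b _ <-]; rewrite ?ract0r // ractDr. Qed.

Lemma pairv_mulv k1 k2 (P : 'M[A]_(k1, k2)) (x : 'I_k1 -> E) (y : 'I_k2 -> E') :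
  pairv pr (rmulv ract P x) y = pairv pr x (lmulv P y).
Proof.
rewrite /pairv /rmulv /lmulv; under eq_bigr do rewrite pr_suml.
rewrite exchange_big /=; apply: eq_bigr => i _.
by rewrite pr_sumr; apply: eq_bigr => j _; rewrite ractP.
Qed.

Lemma rmulv_row k1 k2 (P : 'M[A]_(k1, k2)) x0 (v : 'rV[A]_k1) :
  rmulv ract P (fun i => ract x0 (v 0 i)) = fun j => ract x0 ((v *m P) 0 j).
Proof.
apply: funext => j; rewrite /rmulv mxE ract_sumr; apply: eq_bigr => i _.
by rewrite ractA.
Qed.

Lemma pairv_combl n (c : K) (x x' : 'I_n -> E) y :
  pairv pr (fun i => x i + c *: x' i) y = pairv pr x y + c * pairv pr x' y.
Proof.
by rewrite /pairv mulr_sumr -big_split; apply: eq_bigr => i _; rewrite prDl prZl.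
Qed.

Lemma pairv_combr n (c : K) x (y y' : 'I_n -> E') :
  pairv pr x (fun i => y i + c%:A *: y' i) = pairv pr x y + c * pairv pr x y'.
Proof.
by rewrite /pairv mulr_sumr -big_split; apply: eq_bigr => i _; rewrite prDr prZr.
Qed.

Lemma pairv_subl n (x x' : 'I_n -> E) y :
  pairv pr (fun i => x i - x' i) y = pairv pr x y - pairv pr x' y.
Proof. by rewrite /pairv -sumrB; apply: eq_bigr => i _; rewrite prBl. Qed.

Lemma pairv_subr n x (y y' : 'I_n -> E') :
  pairv pr x (fun i => y i - y' i) = pairv pr x y - pairv pr x y'.
Proof. by rewrite /pairv -sumrB; apply: eq_bigr => i _; rewrite prBr. Qed.

Section InjectiveCase.
Variables (k1 k2 : nat) (P : 'M[A]_(k1, k2)) (x : 'I_k1 -> E').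
Hypothesis x_fiber : fiber_constant (tpair (pairv pr (k:=k1))) (rmulv ract P) x.

Definition row_eval (v : 'rV[A]_k1) : E' := \sum_i v 0 i *: x i.

(* row_eval factors through v |-> v P, by fibre-constancy of x and
   nondegeneracy *)
Lemma row_eval_fiber v v' : v *m P = v' *m P -> row_eval v = row_eval v'.
Proof.
move=> vv'; apply: pr_injr => x0.
have pr_eval w : pr x0 (row_eval w) = pairv pr (fun i => ract x0 (w 0 i)) x.
  by rewrite pr_sumr; apply: eq_bigr => i _; rewrite ractP.
by rewrite !pr_eval; apply: x_fiber; rewrite !rmulv_row vv'.
Qed.

Lemma row_eval_delta i : row_eval (delta_mx 0 i) = x i.
Proof.
rewrite /row_eval (bigD1 i) //= mxE !eqxx scale1r big1 ?addr0 // => j ji.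
by rewrite mxE eqxx (negbTE ji) scale0r.
Qed.

Definition rowimage_eval (m : rowimage P) : E' := row_eval (rowimage_pick m).

Lemma rowimage_eval_linear : linear rowimage_eval.
Proof.
move=> a m m'; rewrite /rowimage_eval.
have -> : a *: row_eval (rowimage_pick m) + row_eval (rowimage_pick m') =
    row_eval (a *: rowimage_pick m + rowimage_pick m').
  rewrite /row_eval scaler_sumr -big_split; apply: eq_bigr => i _.
  by rewrite !mxE scalerDl scalerA.
by apply: row_eval_fiber; rewrite mulmxDl -scalemxAl -!rowimage_pickP.
Qed.

HB.instance Definition _ :=
  GRing.isLinear.Build A (rowimage P) E' _ rowimage_eval rowimage_eval_linear.

(* y_j := g(e_j), where g extends [rowimage_eval] by injectivity of E' *)
Lemma injective_image_orthogonal : injective_module E' ->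
  exists y, lmulv P y = x.
Proof.
move=> injE'; have [g gP] := injE' _ _ val rowimage_eval val_inj.
exists (fun j => g (delta_mx 0 j)); apply: funext => i.
have -> : lmulv P (fun j => g (delta_mx 0 j)) i = g (delta_mx 0 i *m P).
  rewrite -rowE [row i P]row_sum_delta linear_sum; apply: eq_bigr => j _.
  by rewrite linearZ mxE.
rewrite -[delta_mx 0 i *m P]/(val (to_rowimage P (delta_mx 0 i))) gP.
rewrite -(row_eval_delta i) /=; apply: row_eval_fiber.
by rewrite -rowimage_pickP.
Qed.

End InjectiveCase.

(* Let Q generate the syzygies of P, so that im(. P) = ker(. Q).
   If E is flat, every x in E^k2 constant on the fibres of P . lies in
   im(. P): x (x) (rows of Q) vanishes in E (x) A^(1 x k3), hence in
   E (x) im(. Q) by flatness, and the balanced map e (x) v Q |-> [e v]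
   into E^k2 / im(. P) sends it to the class of x. *)
Section FlatCase.
Variables (k1 k2 k3 : nat) (P : 'M[A]_(k1, k2)) (Q : 'M[A]_(k2, k3)).
Hypothesis PQ : P *m Q = 0.
Hypothesis kerQ : forall w : 'rV[A]_k2, w *m Q = 0 -> exists z, w = z *m P.

Definition in_image (w : {ffun 'I_k2 -> E}) : Prop :=
  exists z : 'I_k1 -> E, rmulv ract P z = (fun j => w j).

Lemma in_image0 : in_image 0.
Proof.
exists (fun _ => 0); apply: funext => j.
by rewrite /rmulv ffunE big1 // => i _; rewrite ract0l.
Qed.

Lemma in_imageB a b : in_image a -> in_image b -> in_image (a - b).
Proof.
move=> [z za] [z' zb]; exists (fun i => z i - z' i); apply: funext => j.
rewrite !ffunE -(congr1 (fun f => f j) za) -(congr1 (fun f => f j) zb).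
rewrite /rmulv -sumrB.
by apply: eq_bigr => i _; rewrite ractBl.
Qed.

Local Notation coker := (quo in_image0 in_imageB).

Definition row_act (e : E) (v : 'rV[A]_k2) : {ffun 'I_k2 -> E} :=
  [ffun j => ract e (v 0 j)].

(* [e v] only depends on v Q, since ker(. Q) = im(. P) *)
Lemma row_act_congr e v v' : v *m Q = v' *m Q ->
  \pi_coker (row_act e v) = \pi_coker (row_act e v').
Proof.
move=> vv'; apply/quo_eqP.
have [z vz] : exists z, v - v' = z *m P by apply: kerQ; rewrite mulmxBl vv' subrr.
exists (fun i => ract e (z 0 i)); rewrite rmulv_row -vz; apply: funext => j.
by rewrite !ffunE !mxE ractBr.
Qed.

Definition tensor_eval (e : E) (m : rowimage Q) : coker :=
  \pi_coker (row_act e (rowimage_pick m)).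

Lemma tensor_evalE e v : tensor_eval e (to_rowimage Q v) = \pi_coker (row_act e v).
Proof. by apply: row_act_congr; rewrite -rowimage_pickP. Qed.

Lemma tensor_eval_balanced : balanced ract tensor_eval.
Proof.
split=> [x x' m|x m m'|x a m]; rewrite /tensor_eval.
- by rewrite -quo_piD; congr \pi_coker; apply/ffunP => j; rewrite !ffunE ractDl.
- rewrite -quo_piD.
  have -> : row_act x (rowimage_pick m) + row_act x (rowimage_pick m') =
      row_act x (rowimage_pick m + rowimage_pick m').
    by apply/ffunP => j; rewrite !ffunE !mxE ractDr.
  by apply: row_act_congr; rewrite mulmxDl -!rowimage_pickP.
- have -> : row_act (ract x a) (rowimage_pick m) = row_act x (a *: rowimage_pick m).
    by apply/ffunP => j; rewrite !ffunE !mxE ractA.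
  by apply: row_act_congr; rewrite -scalemxAl -!rowimage_pickP.
Qed.

Lemma tensor_zero_syzygy (x : 'I_k2 -> E) :
  (forall l, \sum_j ract (x j) (Q j l) = 0) ->
  tensor_zero ract x (fun j => val (to_rowimage Q (delta_mx 0 j))).
Proof.
move=> xQ G beta [betaDl betaDr betaA].
have beta0l m : beta 0 m = 0 by apply: (addrI (beta 0 m)); rewrite -betaDl !addr0.
have beta0r e : beta e 0 = 0 by apply: (addrI (beta e 0)); rewrite -betaDr !addr0.
have beta_sumr e n (F : 'I_n -> 'rV[A]_k3) : beta e (\sum_i F i) = \sum_i beta e (F i).
  by elim/big_rec2: _ => [|i a b _ <-]; rewrite ?beta0r // betaDr.
have beta_suml m n (F : 'I_n -> E) : beta (\sum_i F i) m = \sum_i beta (F i) m.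
  by elim/big_rec2: _ => [|i a b _ <-]; rewrite ?beta0l // betaDl.
under eq_bigr do rewrite /= -rowE [row _ Q]row_sum_delta beta_sumr.
rewrite exchange_big big1 //= => l _.
by under eq_bigr do rewrite mxE -betaA; rewrite -beta_suml xQ beta0l.
Qed.

(* a fibre-constant x satisfies x Q = 0: the columns of Q y lie in the
   kernel of P ., since P Q = 0, and are thus orthogonal to x *)
Lemma fiber_constant_syzygy (x : 'I_k2 -> E) :
  fiber_constant (pairv pr (k:=k2)) (lmulv P) x ->
  forall l, \sum_j ract (x j) (Q j l) = 0.
Proof.
move=> x_fiber l; apply: nd1 => y; rewrite pr_suml.
under eq_bigr do rewrite ractP.
rewrite -/(pairv pr x (fun j => Q j l *: y)) (x_fiber _ (fun _ => 0)).
  by rewrite /pairv big1 // => j _; rewrite pr0r.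
apply: funext => i; rewrite /lmulv [RHS]big1 => [|j _]; last by rewrite scaler0.
under eq_bigr do rewrite scalerA; rewrite -scaler_suml.
by move/matrixP/(_ i l): PQ; rewrite !mxE => ->; rewrite scale0r.
Qed.

(* flatness transports the vanishing tensor of [tensor_zero_syzygy] to
   E (x) im(. Q), where [tensor_eval] maps it to the class of x *)
Lemma flat_image_orthogonal (x : 'I_k2 -> E) : flat_module ract ->
  fiber_constant (pairv pr (k:=k2)) (lmulv P) x -> exists z, rmulv ract P z = x.
Proof.
move=> flatE /fiber_constant_syzygy xQ.
have := flatE _ _ val val_inj _ x _ (tensor_zero_syzygy xQ) _ _ tensor_eval_balanced.
rewrite (eq_bigr _ (fun k _ => tensor_evalE (x k) (delta_mx 0 k))) -quo_pi_sum.
move=> sum0; have [z zx] := quo_pi_eq0 sum0; exists z; rewrite zx.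
apply: funext => j; rewrite sum_ffunE (bigD1 j) //= ffunE mxE !eqxx ract1.
by rewrite big1 ?addr0 // => i ij; rewrite ffunE mxE eqxx eq_sym (negbTE ij) ract0r.
Qed.

End FlatCase.

Lemma rmulv_shift k1 k2 (P : 'M[A]_(k1, k2)) (t : K) (z p q : 'I_k1 -> E) :
  rmulv ract P p = rmulv ract P q ->
  rmulv ract P (fun i => z i + t *: (p i - q i)) = rmulv ract P z.
Proof.
move=> pq; apply: funext => j; move/(congr1 (fun f => f j)): pq.
rewrite /rmulv => pq; under eq_bigr do rewrite ractDl ractZl ractBl.
by rewrite big_split /= -scaler_sumr sumrB pq subrr scaler0 addr0.
Qed.

Lemma lmulv_shift k1 k2 (P : 'M[A]_(k1, k2)) (t : K) (z p q : 'I_k2 -> E') :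
  lmulv P p = lmulv P q ->
  lmulv P (fun i => z i + t%:A *: (p i - q i)) = lmulv P z.
Proof.
move=> pq; apply: funext => i; move/(congr1 (fun f => f i)): pq.
rewrite /lmulv => pq.
under eq_bigr do rewrite scalerDr scalerA mulr_algr -mulr_algl -scalerA scalerBr.
by rewrite big_split /= -scaler_sumr sumrB pq subrr scaler0 addr0.
Qed.

Lemma injective_case k1 k2 (P : 'M[A]_(k1, k2)) : injective_module E' ->
  wclosed (pairv pr (k:=k1)) (fun y => exists z, lmulv P z = y) /\
  strict_morphism (tpair (pairv pr (k:=k1))) (tpair (pairv pr (k:=k2)))
    (rmulv ract P).
Proof.
move=> injE'.
have adj y z : tpair (pairv pr (k:=k2)) y (rmulv ract P z) =
    tpair (pairv pr (k:=k1)) (lmulv P y) z.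
  exact: pairv_mulv.
have orth x : fiber_constant (tpair (pairv pr (k:=k1))) (rmulv ract P) x ->
    exists y, lmulv P y = x.
  by move=> x_fiber; apply: injective_image_orthogonal.
split; first exact: dual_image_closed adj orth.
apply: (@dual_strict _ _ _ _ _ _ _ _ _ adj
  (fun t z p q i => z i + t *: (p i - q i)) (@rmulv_shift _ _ P) _
  (fun c x x' i => x i + (- c)%:A *: x' i)).
- by move=> t z p q x; rewrite /tpair pairv_combl pairv_subl.
- by move=> c x x' z; rewrite /tpair pairv_combr mulNr.
exact: orth.
Qed.

Lemma flat_case k1 k2 (P : 'M[A]_(k1, k2)) :
  is_domain A -> noetherian A -> coker_torsion_free P -> flat_module ract ->
  wclosed (tpair (pairv pr (k:=k2))) (fun x => exists z, rmulv ract P z = x) /\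
  strict_morphism (pairv pr (k:=k2)) (pairv pr (k:=k1)) (lmulv P).
Proof.
move=> domA noethA tf flatE.
have [k3 [Q [PQ kerQ]]] := syzygy domA noethA tf.
have adj y z : pairv pr (k:=k1) y (lmulv P z) = pairv pr (k:=k2) (rmulv ract P y) z.
  by rewrite pairv_mulv.
have orth x : fiber_constant (pairv pr (k:=k2)) (lmulv P) x ->
    exists y, rmulv ract P y = x.
  exact: flat_image_orthogonal PQ kerQ x flatE.
split; first exact: dual_image_closed adj orth.
apply: (@dual_strict _ _ _ _ _ _ _ _ _ adj
  (fun t z p q i => z i + t%:A *: (p i - q i)) (@lmulv_shift _ _ P) _
  (fun c x x' i => x i + (- c) *: x' i)).
- by move=> t z p q x; rewrite pairv_combr pairv_subr.
- by move=> c x x' z; rewrite pairv_combl mulNr.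
exact: orth.
Qed.

End Pairing.

Theorem lemma4 (K : numFieldType) (A : algType K)
  (E : lmodType K) (E' : lmodType A) (pr : E -> E' -> K)
  (ract : E -> A -> E) (k1 k2 : nat) (P1 : 'M[A]_(k1, k2)) :
  (* A is a Noetherian domain *)
  is_domain A -> noetherian A ->
  (* <-,-> is K-bilinear (K acts on E' through K -> A) *)
  (forall (c : K) x x2 y, pr (c *: x + x2) y = c * pr x y + pr x2 y) ->
  (forall (c : K) x y y2, pr x (c%:A *: y + y2) = c * pr x y + pr x y2) ->
  (* nondegenerate *)
  (forall x, (forall y, pr x y = 0) -> x = 0) ->
  (forall y, (forall x, pr x y = 0) -> y = 0) ->
  (* E' is semitopological for sigma(E', E) *)
  (forall a : A, wcontinuous pr pr (fun y : E' => a *: y)) ->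
  (* right A-module structure of E: <x a, x'> = <x, a x'> *)
  (forall x a y, pr (ract x a) y = pr x (a *: y)) ->
  (* (i) *)
  (injective_module E' ->
     wclosed (pairv pr (k:=k1)) (fun y => exists z, lmulv P1 z = y) /\
     strict_morphism (tpair (pairv pr (k:=k1))) (tpair (pairv pr (k:=k2)))
       (rmulv ract P1)) /\
  (* (ii) *)
  (coker_torsion_free P1 -> flat_module ract ->
     wclosed (tpair (pairv pr (k:=k2))) (fun x => exists z, rmulv ract P1 z = x) /\
     strict_morphism (pairv pr (k:=k2)) (pairv pr (k:=k1)) (lmulv P1)).
Proof.
move=> domA noethA bil1 bil2 nd1 nd2 _ ractP; split.
  exact: injective_case.
exact: flat_case.
Qed.
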